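(* Let $F:\mathcal{G}_{\Sigma,\Delta,\pi}\to\mathcal{G}_{\Sigma,\Delta,\pi}$ be a causal graph dynamics that is monotonic for the subgraph order and admits a monotonic local rule. Assume that for every renaming $R$ the set $\mathrm{Conj}_F(R)$ is a singleton (unique conjugate assumption). Then there is exactly one functor $\widetilde{F}:\mathbf{G}_{\Sigma,\Delta,\pi}\to\mathbf{G}_{\Sigma,\Delta,\pi}$ satisfying $\mathrm{U}\circ F=\widetilde{F}\circ\mathrm{U}$.
   Context: Fix an uncountably infinite set $\mathcal{V}$, sets $\Sigma,\Delta$, finite $\pi$. Graphs: countable $V(G)\subset\mathcal{V}$, a set $E(G)$ of pairwise disjoint two-element subsets of $V(G)\times\pi$, partial labelings $\sigma(G),\delta(G)$; $\mathcal{G}_{\Sigma,\Delta,\pi}$ the set of graphs, ordered by componentwise inclusion $\subseteq$. Renamings are bijections of $\mathcal{V}$, acting naturally on graphs ($V(R(G))=R(V(G))$, edges $\{u\!:\!i,v\!:\!j\}\mapsto\{R(u)\!:\!i,R(v)\!:\!j\}$, labelings precomposed with $R^{-1}$). $\mathrm{Conj}_F(R)$ is the set of renamings $R'$ with $F\circ R=R'\circ F$. Disks $G^r_c$: vertices at distance $\le r+1$ from $c$, edges with an endpoint at distance $\le r$, vertex labels only at distance $\le r$. A local rule of radius $r$ maps radius-$r$ disks to graphs with renaming covariance, disjointness preservation, bounded output size and pairwise consistency of outputs on a common graph; a CGD is $F(G)=\bigcup_{v\in V(G)} f(G^r_v)$; monotonic means w.r.t. $\subseteq$. Category $\mathbf{G}_{\Sigma,\Delta,\pi}$: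 objects graphs, morphisms $m:G\to H$ given by renamings $|m|$ with $|m|(G)\subseteq H$, composition by composition of renamings, identities with identity renaming. $\mathrm{U}:(\mathcal{G}_{\Sigma,\Delta,\pi},\subseteq)\to\mathbf{G}_{\Sigma,\Delta,\pi}$ is the identity on objects and sends $G\subseteq H$ to the morphism $G\to H$ with identity renaming. *)

From Stdlib Require Import Classical ClassicalDescription FunctionalExtensionality
  ProofIrrelevance List FinFun.

Set Implicit Arguments.

Section CGD.
Variables (V Sg Dl P : Type).
(* V = the name space \mathcal{V}; Sg = Sigma (vertex labels);
   Dl = Delta (edge labels); P = pi (ports). *)

Definition port := (V * P)%type.
Definition edge := port -> Prop.   (* an edge is a (two-element) set of ports *)

Record rgraph := RGraph {
  rV : V -> Prop;
  rE : edge -> Prop;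
  rs : V -> option Sg;
  rd : edge -> option Dl }.

Definition countable (A : V -> Prop) : Prop :=
  exists f : V -> nat, forall x y, A x -> A y -> f x = f y -> x = y.

Definition two_elem (e : edge) : Prop :=
  exists a b : port, a <> b /\ forall p, e p <-> p = a \/ p = b.

Definition is_graph (g : rgraph) : Prop :=
  countable (rV g)
  /\ (forall e, rE g e -> two_elem e /\ forall p, e p -> rV g (fst p))
  /\ (forall e e', rE g e -> rE g e' -> e = e' \/ forall p, e p -> e' p -> False)
  /\ (forall v a, rs g v = Some a -> rV g v)
  /\ (forall e a, rd g e = Some a -> rE g e).

Definition graph := { g : rgraph | is_graph g }.

Definition subg (g h : rgraph) : Prop :=
  (forall v, rV g v -> rV h v)
  /\ (forall e, rE g e -> rE h e)
  /\ (forall v a, rs g v = Some a -> rs h v = Some a)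
  /\ (forall e a, rd g e = Some a -> rd h e = Some a).

Lemma subg_refl g : subg g g.
Proof. repeat split; auto. Qed.

Lemma subg_trans g h k : subg g h -> subg h k -> subg g k.
Proof.
  intros [a1 [b1 [c1 d1]]] [a2 [b2 [c2 d2]]]; repeat split; auto.
Qed.

Record renaming := Renaming {
  ren : V -> V;
  ren_inv : V -> V;
  ren_K : forall v, ren_inv (ren v) = v;
  ren_invK : forall v, ren (ren_inv v) = v }.

Definition id_ren : renaming :=
  @Renaming (fun v => v) (fun v => v) (fun v => eq_refl) (fun v => eq_refl).

Program Definition comp_ren (R1 R2 : renaming) : renaming :=
  @Renaming (fun v => ren R2 (ren R1 v)) (fun v => ren_inv R1 (ren_inv R2 v)) _ _.
Next Obligation. now rewrite ren_K, ren_K. Qed.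
Next Obligation. now rewrite ren_invK, ren_invK. Qed.

(* natural action of a renaming on graphs:
   V(R G) = R(V(G)); an edge e is in E(R G) iff it is the image of an edge of G,
   i.e. iff its preimage {u:i | R(u):i in e} is in E(G); labelings are
   precomposed with R^{-1}. *)
Definition rename (R : renaming) (g : rgraph) : rgraph := {|
  rV := fun v => rV g (ren_inv R v);
  rE := fun e => rE g (fun q => e (ren R (fst q), snd q));
  rs := fun v => rs g (ren_inv R v);
  rd := fun e => rd g (fun q => e (ren R (fst q), snd q)) |}.

Lemma rename_mono R g h : subg g h -> subg (rename R g) (rename R h).
Proof. intros [a [b [c d]]]; repeat split; simpl; auto. Qed.

Lemma rename_comp R1 R2 g : rename (comp_ren R1 R2) g = rename R2 (rename R1 g).
Proof. reflexivity. Qed.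

Lemma eta_edge (e : edge) : (fun q : port => e (fst q, snd q)) = e.
Proof. apply functional_extensionality; intros [x y]; reflexivity. Qed.

Lemma rename_id_subg g : subg (rename id_ren g) g.
Proof.
  repeat split; simpl; auto.
  - intros e; now rewrite eta_edge.
  - intros e a; now rewrite eta_edge.
Qed.

Definition Hom (G H : graph) : Type :=
  { R : renaming | subg (rename R (proj1_sig G)) (proj1_sig H) }.

Definition id_hom (G : graph) : Hom G G :=
  exist _ id_ren (rename_id_subg (proj1_sig G)).

Definition comp_hom (G H K : graph) (m1 : Hom G H) (m2 : Hom H K) : Hom G K :=
  exist _ (comp_ren (proj1_sig m1) (proj1_sig m2))
    (subg_trans (rename_mono (proj1_sig m2) (proj2_sig m1)) (proj2_sig m2)).

Definition U_mor (G H : graph) (p : subg (proj1_sig G) (proj1_sig H)) : Hom G H :=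
  exist _ id_ren (subg_trans (rename_id_subg (proj1_sig G)) p).

Record endofunctor := Endofunctor {
  fobj : graph -> graph;
  fmor : forall G H : graph, Hom G H -> Hom (fobj G) (fobj H);
  fmor_id : forall G, fmor (id_hom G) = id_hom (fobj G);
  fmor_comp : forall G H K (m1 : Hom G H) (m2 : Hom H K),
      fmor (comp_hom m1 m2) = comp_hom (fmor m1) (fmor m2) }.

(* U o F = Ftilde o U, as functors (G, subseteq) -> G_{Sigma,Delta,pi}:
   equal on objects, and Ftilde(U(G subseteq H)) is the morphism
   F(G) -> F(H) with identity renaming, i.e. U(F(G) subseteq F(H)). *)
Definition commutes_U (F : graph -> graph) (Phi : endofunctor) : Prop :=
  (forall G, fobj Phi G = F G)
  /\ (forall (G H : graph) (p : subg (proj1_sig G) (proj1_sig H)),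
        proj1_sig (fmor Phi (U_mor G H p)) = id_ren).

Definition monotone_dyn (F : graph -> graph) : Prop :=
  forall G H : graph, subg (proj1_sig G) (proj1_sig H) ->
    subg (proj1_sig (F G)) (proj1_sig (F H)).

Definition conj_ren (F : graph -> graph) (R R' : renaming) : Prop :=
  forall G G' : graph, proj1_sig G' = rename R (proj1_sig G) ->
    proj1_sig (F G') = rename R' (proj1_sig (F G)).

Definition adj (g : rgraph) (u v : V) : Prop :=
  exists e i j, rE g e /\ e (u, i) /\ e (v, j) /\ (u, i) <> (v, j).

(* within g n u v  <->  dist_g(u, v) <= n *)
Fixpoint within (g : rgraph) (n : nat) (u v : V) : Prop :=
  match n with
  | O => u = v
  | S n => within g n u v \/ exists w, within g n u w /\ adj g w v
  end.

Definition disk (g : rgraph) (r : nat) (c : V) : rgraph := {|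
  rV := fun v => rV g v /\ within g (S r) c v;
  rE := fun e => rE g e /\ exists p, e p /\ within g r c (fst p);
  rs := fun v => if excluded_middle_informative (within g r c v) then rs g v else None;
  rd := fun e => if excluded_middle_informative
                      (rE g e /\ exists p, e p /\ within g r c (fst p))
                 then rd g e else None |}.

Definition is_disk (r : nat) (D : rgraph) : Prop :=
  exists (G : graph) (c : V), rV (proj1_sig G) c /\ D = disk (proj1_sig G) r c.

(* two graphs are consistent: their union is a graph *)
Definition consistent (g h : rgraph) : Prop :=
  (forall e e', rE g e -> rE h e' -> e = e' \/ forall p, e p -> e' p -> False)
  /\ (forall v a b, rs g v = Some a -> rs h v = Some b -> a = b)
  /\ (forall e a b, rd g e = Some a -> rd h e = Some b -> a = b).

Definition local_rule (r : nat) (f : rgraph -> rgraph) : Prop :=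
  (forall D, is_disk r D -> is_graph (f D))
  /\ (forall R : renaming, exists R' : renaming,
        forall D, is_disk r D -> f (rename R D) = rename R' (f D))
  /\ (forall D1 D2, is_disk r D1 -> is_disk r D2 ->
        (forall v, rV D1 v -> rV D2 v -> False) ->
        forall v, rV (f D1) v -> rV (f D2) v -> False)
  /\ (exists b : nat, forall D, is_disk r D ->
        exists l : list V, length l <= b /\ forall v, rV (f D) v -> In v l)
  /\ (forall (G : graph) u v, rV (proj1_sig G) u -> rV (proj1_sig G) v ->
        consistent (f (disk (proj1_sig G) r u)) (f (disk (proj1_sig G) r v))).

Definition monotone_rule (r : nat) (f : rgraph -> rgraph) : Prop :=
  forall D D', is_disk r D -> is_disk r D' -> subg D D' -> subg (f D) (f D').

Definition generates (r : nat) (f : rgraph -> rgraph) (F : graph -> graph) : Prop :=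
  forall G : graph,
    let g := proj1_sig G in
    let FG := proj1_sig (F G) in
    (forall x, rV FG x <-> exists v, rV g v /\ rV (f (disk g r v)) x)
    /\ (forall e, rE FG e <-> exists v, rV g v /\ rE (f (disk g r v)) e)
    /\ (forall x a, rs FG x = Some a <-> exists v, rV g v /\ rs (f (disk g r v)) x = Some a)
    /\ (forall e a, rd FG e = Some a <-> exists v, rV g v /\ rd (f (disk g r v)) e = Some a).

Definition cgd_with (r : nat) (f : rgraph -> rgraph) (F : graph -> graph) : Prop :=
  local_rule r f /\ generates r f F.

End CGD.

(* A functor [Phi] with [U o F = Phi o U] is determined on objects, and on
   morphisms by its value on the canonical renaming morphisms [G -> R(G)],
   since every morphism factors as such a renaming followed by an inclusion.
   Functoriality against inclusions makes this value independent of [G], and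
   functoriality against [R] and [R^-1] shows, through the antisymmetry of
   [subg], that it is a conjugate of [R]; by the unique conjugate assumption
   it is the conjugate.  Conversely, sending a morphism to the conjugate of
   its renaming is a functor: monotonicity of [F] gives the morphism
   [F(G) -> F(H)], and uniqueness of conjugates gives functoriality. *)

From Stdlib Require Import FinFun.
From Stdlib Require Import ClassicalDescription FunctionalExtensionality
  ProofIrrelevance PropExtensionality.

Set Implicit Arguments.

Section GraphCategory.
Variables (V Sg Dl P : Type).
Notation graph := (graph V Sg Dl P).
Notation rgraph := (rgraph V Sg Dl P).
Notation renaming := (renaming V).

Lemma renaming_ext (R1 R2 : renaming) :
  (forall v, ren R1 v = ren R2 v) -> (forall v, ren_inv R1 v = ren_inv R2 v) -> R1 = R2.
Proof.
  destruct R1 as [a b c d], R2 as [a' b' c' d']; simpl; intros Ha Hb.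
  assert (a = a') by (apply functional_extensionality; auto).
  assert (b = b') by (apply functional_extensionality; auto).
  subst; f_equal; apply proof_irrelevance.
Qed.

Definition inv_ren (R : renaming) : renaming :=
  @Renaming V (ren_inv R) (ren R) (ren_invK R) (ren_K R).

Lemma inv_renK (R : renaming) : inv_ren (inv_ren R) = R.
Proof. now apply renaming_ext. Qed.

Lemma comp_ren_idl (R : renaming) : comp_ren (id_ren V) R = R.
Proof. now apply renaming_ext. Qed.

Lemma comp_ren_idr (R : renaming) : comp_ren R (id_ren V) = R.
Proof. now apply renaming_ext. Qed.

Lemma comp_ren_invr (R : renaming) : comp_ren R (inv_ren R) = id_ren V.
Proof. apply renaming_ext; intro v; apply ren_K. Qed.

Lemma rename_pointwise_id (R : renaming) (g : rgraph) :
  (forall v, ren R v = v) -> rename R g = g.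
Proof.
  intro HR.
  assert (HRi : forall v, ren_inv R v = v).
  { intro v; rewrite <- (HR (ren_inv R v)); apply ren_invK. }
  assert (HE : forall e : edge V P, (fun q : port V P => e (ren R (fst q), snd q)) = e).
  { intro e; apply functional_extensionality; intros [x i]; simpl; now rewrite HR. }
  destruct g as [a b c d]; unfold rename; simpl; f_equal;
    apply functional_extensionality; intro x; now rewrite ?HRi, ?HE.
Qed.

Lemma rename_cancel (R S : renaming) (g : rgraph) :
  (forall v, ren S (ren R v) = v) -> rename S (rename R g) = g.
Proof. intro HRS; rewrite <- rename_comp; now apply rename_pointwise_id. Qed.

Lemma subg_antisym (g h : rgraph) : subg g h -> subg h g -> g = h.
Proof.
  destruct g as [a b c d], h as [a' b' c' d']; unfold subg; simpl.
  intros [H1 [H2 [H3 H4]]] [K1 [K2 [K3 K4]]].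
  f_equal; apply functional_extensionality; intro x;
    try (apply propositional_extensionality; split; auto).
  - destruct (c x) eqn:E; [symmetry; now apply H3|].
    destruct (c' x) eqn:E'; [rewrite (K3 _ _ E') in E; discriminate | reflexivity].
  - destruct (d x) eqn:E; [symmetry; now apply H4|].
    destruct (d' x) eqn:E'; [rewrite (K4 _ _ E') in E; discriminate | reflexivity].
Qed.

Lemma graph_eq (G H : graph) : proj1_sig G = proj1_sig H -> G = H.
Proof. destruct G, H; simpl; intros ->; f_equal; apply proof_irrelevance. Qed.

Lemma is_graph_rename (R : renaming) (g : rgraph) : is_graph g -> is_graph (rename R g).
Proof.
  intros [[f Hf] [HE [HD [Hs Hd]]]].
  assert (Hpre : forall (e : edge V P) x i,
             e (x, i) = (fun q : port V P => e (ren R (fst q), snd q)) (ren_inv R x, i)).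
  { intros; simpl; now rewrite ren_invK. }
  split; [|split; [|split; [|split]]]; simpl.
  - exists (fun v => f (ren_inv R v)); intros x y Hx Hy Hxy.
    rewrite <- (ren_invK R x), <- (ren_invK R y); f_equal; auto.
  - intros e He; destruct (HE _ He) as [[[a i] [[b j] [Hab Hp]]] Hv]; split.
    + exists (ren R a, i), (ren R b, j); split.
      * intro Heq; apply Hab; injection Heq as Ha Hi.
        rewrite <- (ren_K R a), <- (ren_K R b), Ha, Hi; reflexivity.
      * intros [x k]; rewrite (Hpre e x k), (Hp (ren_inv R x, k)); split.
        -- intros [H|H]; injection H as <- ->; [left|right]; now rewrite ren_invK.
        -- intros [H|H]; injection H as -> ->; [left|right]; now rewrite ren_K.
    + intros [x k] Hx; rewrite (Hpre e x k) in Hx; exact (Hv _ Hx).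
  - intros e e' He He'; destruct (HD _ _ He He') as [Heq|Hdis].
    + left; apply functional_extensionality; intros [x k].
      rewrite (Hpre e x k), (Hpre e' x k); exact (f_equal (fun h => h (ren_inv R x, k)) Heq).
    + right; intros [x k] H1 H2; rewrite (Hpre e x k) in H1; rewrite (Hpre e' x k) in H2.
      exact (Hdis _ H1 H2).
  - intros v a H; exact (Hs _ _ H).
  - intros e a H; exact (Hd _ _ H).
Qed.

Definition rename_graph (R : renaming) (G : graph) : graph :=
  exist _ (rename R (proj1_sig G)) (is_graph_rename R (proj2_sig G)).

Definition empty_graph : graph.
Proof.
  refine (exist _ {| rV := fun _ => False; rE := fun _ => False;
                     rs := fun _ => None; rd := fun _ => None |} _).
  repeat split; simpl; try tauto; try discriminate.
  exists (fun _ => 0); tauto.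
Defined.

Lemma empty_subg (G : graph) : subg (proj1_sig empty_graph) (proj1_sig G).
Proof. repeat split; simpl; try tauto; discriminate. Qed.

Lemma hom_eq (G H : graph) (m1 m2 : Hom G H) : proj1_sig m1 = proj1_sig m2 -> m1 = m2.
Proof. destruct m1, m2; simpl; intros ->; f_equal; apply proof_irrelevance. Qed.

Definition rename_hom (R : renaming) (G : graph) : Hom G (rename_graph R G) :=
  exist _ R (subg_refl _).

Lemma hom_factor (G H : graph) (m : Hom G H) :
  m = comp_hom (rename_hom (proj1_sig m) G)
               (U_mor (rename_graph (proj1_sig m) G) H (proj2_sig m)).
Proof. apply hom_eq; symmetry; apply comp_ren_idr. Qed.

Lemma endofunctor_eq (Phi1 Phi2 : endofunctor V Sg Dl P) :
  (forall G, fobj Phi1 G = fobj Phi2 G) ->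
  (forall G H (m : Hom G H), proj1_sig (fmor Phi1 m) = proj1_sig (fmor Phi2 m)) ->
  Phi1 = Phi2.
Proof.
  destruct Phi1 as [o1 m1 i1 c1], Phi2 as [o2 m2 i2 c2]; simpl; intros Ho Hm.
  assert (o1 = o2) by (apply functional_extensionality; auto); subst o2.
  assert (m1 = m2).
  { do 2 (apply functional_extensionality_dep; intro).
    apply functional_extensionality; intro m; apply hom_eq, Hm. }
  subst m2; f_equal; apply proof_irrelevance.
Qed.

Section Conjugates.
Variable F : graph -> graph.

Lemma conj_ren_id : conj_ren F (id_ren V) (id_ren V).
Proof.
  intros G G' HG'; rewrite rename_pointwise_id in HG' by reflexivity.
  rewrite (graph_eq G' G HG'); symmetry; now apply rename_pointwise_id.
Qed.

Lemma conj_ren_comp (R1 R2 S1 S2 : renaming) :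
  conj_ren F R1 S1 -> conj_ren F R2 S2 -> conj_ren F (comp_ren R1 R2) (comp_ren S1 S2).
Proof.
  intros H1 H2 G G' HG'.
  rewrite (H2 (rename_graph R1 G) G' HG'); simpl.
  now rewrite (H1 G (rename_graph R1 G) eq_refl).
Qed.

Lemma conj_ren_subg (R S : renaming) (G H : graph) :
  monotone_dyn F -> conj_ren F R S ->
  subg (rename R (proj1_sig G)) (proj1_sig H) ->
  subg (rename S (proj1_sig (F G))) (proj1_sig (F H)).
Proof.
  intros Fmono HRS HGH.
  rewrite <- (HRS G (rename_graph R G) eq_refl); exact (Fmono (rename_graph R G) H HGH).
Qed.

Section ConjugateFunctor.
Hypothesis F_mono : monotone_dyn F.
Variable C : renaming -> renaming.
Hypothesis C_conj : forall R, conj_ren F R (C R).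
Hypothesis C_id : C (id_ren V) = id_ren V.
Hypothesis C_comp : forall R1 R2, C (comp_ren R1 R2) = comp_ren (C R1) (C R2).

Definition conj_fmor (G H : graph) (m : Hom G H) : Hom (F G) (F H) :=
  exist _ (C (proj1_sig m))
    (@conj_ren_subg (proj1_sig m) (C (proj1_sig m)) G H F_mono (@C_conj _) (proj2_sig m)).

Definition conj_functor : endofunctor V Sg Dl P.
Proof.
  refine (@Endofunctor V Sg Dl P F conj_fmor _ _); intros; apply hom_eq; simpl.
  - exact C_id.
  - apply C_comp.
Defined.

Lemma conj_functor_commutes_U : commutes_U F conj_functor.
Proof. split; [reflexivity | intros; exact C_id]. Qed.

End ConjugateFunctor.

Lemma commutes_U_exists :
  monotone_dyn F -> (forall R : renaming, exists! S, conj_ren F R S) ->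
  exists Phi, commutes_U F Phi.
Proof.
  intros Fmono Huniq.
  destruct (unique_choice _ Huniq) as [C C_conj].
  assert (C_eq : forall R S, conj_ren F R S -> C R = S).
  { intros R S HRS; destruct (Huniq R) as [S0 [_ HS0]].
    now rewrite <- (HS0 _ (C_conj R)), <- (HS0 _ HRS). }
  exists (@conj_functor Fmono C C_conj (C_eq _ _ conj_ren_id)
            (fun R1 R2 => C_eq _ _ (conj_ren_comp (C_conj R1) (C_conj R2)))).
  apply conj_functor_commutes_U.
Qed.

Section CommutingFunctor.
Variable Phi : endofunctor V Sg Dl P.
Hypothesis HPhi : commutes_U F Phi.

Lemma fmor_subg (G H : graph) (m : Hom G H) :
  subg (rename (proj1_sig (fmor Phi m)) (proj1_sig (F G))) (proj1_sig (F H)).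
Proof. destruct HPhi as [Hobj _]; rewrite <- !Hobj; exact (proj2_sig (fmor Phi m)). Qed.

Lemma fmor_factor (G H : graph) (m : Hom G H) :
  proj1_sig (fmor Phi m) = proj1_sig (fmor Phi (rename_hom (proj1_sig m) G)).
Proof.
  rewrite (hom_factor m) at 1; rewrite fmor_comp; simpl.
  destruct HPhi as [_ HU]; rewrite HU; apply comp_ren_idr.
Qed.

Lemma fmor_rename_hom_subg (R : renaming) (G K : graph) :
  subg (proj1_sig G) (proj1_sig K) ->
  proj1_sig (fmor Phi (rename_hom R G)) = proj1_sig (fmor Phi (rename_hom R K)).
Proof.
  intro HGK.
  pose (m := comp_hom (U_mor G K HGK) (rename_hom R K)).
  assert (Hm : proj1_sig m = R) by apply comp_ren_idl.
  pose proof (fmor_factor m) as Hfactor; rewrite Hm in Hfactor.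
  rewrite <- Hfactor; unfold m; rewrite fmor_comp; simpl.
  destruct HPhi as [_ HU]; rewrite HU; apply comp_ren_idl.
Qed.

Definition fmor_ren (R : renaming) : renaming :=
  proj1_sig (fmor Phi (rename_hom R empty_graph)).

Lemma fmor_ren_hom (G H : graph) (m : Hom G H) :
  proj1_sig (fmor Phi m) = fmor_ren (proj1_sig m).
Proof.
  rewrite fmor_factor; symmetry; apply fmor_rename_hom_subg, empty_subg.
Qed.

Lemma fmor_ren_inv (R : renaming) : comp_ren (fmor_ren R) (fmor_ren (inv_ren R)) = id_ren V.
Proof.
  pose (G := rename_graph R empty_graph).
  assert (HG : subg (rename (inv_ren R) (proj1_sig G)) (proj1_sig empty_graph)).
  { unfold G; cbn [proj1_sig rename_graph].
    rewrite rename_cancel; [apply subg_refl | apply ren_K]. }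
  pose (m' := exist _ (inv_ren R) HG : Hom G empty_graph).
  assert (Hmm : comp_hom (rename_hom R empty_graph) m' = id_hom empty_graph)
    by (apply hom_eq, comp_ren_invr).
  apply (f_equal (fun m => proj1_sig (fmor Phi m))) in Hmm.
  rewrite fmor_comp, fmor_id in Hmm; simpl in Hmm.
  rewrite <- Hmm; f_equal; exact (eq_sym (fmor_ren_hom m')).
Qed.

Lemma conj_ren_fmor_ren (R : renaming) : conj_ren F R (fmor_ren R).
Proof.
  intros G G' HG'.
  assert (HR : subg (rename R (proj1_sig G)) (proj1_sig G')) by (rewrite HG'; apply subg_refl).
  assert (HRi : subg (rename (inv_ren R) (proj1_sig G')) (proj1_sig G)).
  { rewrite HG', rename_cancel; [apply subg_refl | apply ren_K]. }
  pose proof (fmor_subg (exist _ R HR : Hom G G')) as Hfwd.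
  pose proof (fmor_subg (exist _ (inv_ren R) HRi : Hom G' G)) as Hbwd.
  rewrite fmor_ren_hom in Hfwd, Hbwd; simpl in Hfwd, Hbwd.
  apply subg_antisym; [|exact Hfwd].
  apply rename_mono with (R := fmor_ren R) in Hbwd.
  rewrite rename_cancel in Hbwd; [exact Hbwd|].
  intro v; pose proof (fmor_ren_inv (inv_ren R)) as Hinv; rewrite inv_renK in Hinv.
  exact (f_equal (fun S => ren S v) Hinv).
Qed.

Lemma commutes_U_conj (G H : graph) (m : Hom G H) :
  conj_ren F (proj1_sig m) (proj1_sig (fmor Phi m)).
Proof. rewrite fmor_ren_hom; apply conj_ren_fmor_ren. Qed.

End CommutingFunctor.

Lemma commutes_U_unique (Phi1 Phi2 : endofunctor V Sg Dl P) :
  commutes_U F Phi1 -> commutes_U F Phi2 ->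
  (forall R S1 S2 : renaming, conj_ren F R S1 -> conj_ren F R S2 -> S1 = S2) ->
  Phi1 = Phi2.
Proof.
  intros H1 H2 Hconj; apply endofunctor_eq.
  - intro G; now rewrite (proj1 H1), (proj1 H2).
  - intros G H m; exact (Hconj _ _ _ (commutes_U_conj H1 m) (commutes_U_conj H2 m)).
Qed.

End Conjugates.

End GraphCategory.

Theorem proposition4p12 (V Sg Dl P : Type)
  (HV : ~ countable (fun _ : V => True))
  (HP : Finite P)
  (F : graph V Sg Dl P -> graph V Sg Dl P)
  (Hmono : monotone_dyn F)
  (Hrule : exists (r : nat) (f : rgraph V Sg Dl P -> rgraph V Sg Dl P),
             cgd_with r f F /\ monotone_rule r f)
  (Huniq : forall R : renaming V, exists! R' : renaming V, conj_ren F R R') :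
  exists! Phi : endofunctor V Sg Dl P, commutes_U F Phi.
Proof.
  destruct (commutes_U_exists Hmono Huniq) as [Phi HPhi].
  exists Phi; split; [exact HPhi|].
  intros Phi' HPhi'; apply (commutes_U_unique HPhi HPhi').
  intros R S1 S2 H1 H2; destruct (Huniq R) as [S [_ HS]].
  now rewrite <- (HS _ H1), <- (HS _ H2).
Qed.
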